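(* In the Gaussian sequential learning model with binary states and heterogeneous privacy budgets described in the context, where the budgets $\varepsilon_n$ are drawn independently from the uniform distribution $\mathrm{U}[0,1]$, asymptotic learning occurs almost surely under the smooth randomized response strategy.
   Context: Gaussian model: unknown state $\theta\in\{-1,+1\}$ with uniform prior; agents $n=1,2,\dots$ act in sequence; agent $n$ privately observes $s_n\sim\mathcal{N}(\theta,\sigma^2)$, i.i.d. given $\theta$, $\sigma>0$, and has a private budget $\varepsilon_n\sim\mathrm{U}[0,1]$, independent across agents and of everything else. The public log-likelihood ratio is $l_n=\log\frac{\mathbb{P}(\theta=+1\mid x_1,\dots,x_{n-1})}{\mathbb{P}(\theta=-1\mid x_1,\dots,x_{n-1})}$, $l_1=0$, where $x_i$ are reported actions. With $t(l)=-\sigma^2l/2$, agent $n$'s intended action is $a_n=+1$ if $s_n>t(l_n)$, else $-1$; under smooth randomized response she reports $x_n=a_n$ with probability $1-u_n$ and $x_n=-a_n$ with probability $u_n=\frac12e^{-\varepsilon_n|s_n-t(l_n)|}$. The public, not observing $\varepsilon_n$, updates $l_{n+1}=l_n+\log\frac{\mathbb{P}(x_n\mid l_n,\theta=+1)}{\mathbb{P}(x_n\mid l_n,\theta=-1)}$, where these probabilities average over both $s_n$ and $\varepsilon_n$. Asymptotic learning means agents' actions converge to the true state, i.e., $\lim_{n\to\infty}\mathbb{P}(a_n=\theta)=1$. *)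

From HB Require Import structures.
From mathcomp Require Import all_boot all_order all_algebra.
From mathcomp Require Import all_classical all_reals all_analysis.
Set Implicit Arguments. Unset Strict Implicit. Unset Printing Implicit Defensive.
Import Order.TTheory GRing.Theory Num.Theory.
Import numFieldNormedType.Exports.
Local Open Scope classical_set_scope.
Local Open Scope ring_scope.

Section Model.
Context {R : realType}.
Variable sigma : R.

(* states / actions in {-1,+1} are encoded as booleans: true = +1, false = -1 *)
Definition sgn (b : bool) : R := if b then 1 else -1.

Definition thr (l : R) : R := - (sigma ^+ 2 * l) / 2.

Definition intended (l s : R) : bool := thr l < s.

Definition flipprob (l s eps : R) : R := expR (- (eps * `|s - thr l|)) / 2.

Definition sig_pdf (theta : bool) (s : R) : R := normal_pdf (sgn theta) sigma s.

(* P(x_n = x | l_n = l, theta), averaging over s ~ N(theta,sigma^2) and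
   eps ~ U[0,1] (independent) *)
Definition report_prob (theta : bool) (l : R) (x : bool) : R :=
  \int[lebesgue_measure]_(s in [set: R])
    (sig_pdf theta s *
     \int[lebesgue_measure]_(e in `[0%R, 1%R])
        (if intended l s == x then 1 - flipprob l s e else flipprob l s e)).

Definition lupdate (l : R) (x : bool) : R :=
  l + ln (report_prob true l x / report_prob false l x).

Fixpoint lrun (l : R) (xs : seq bool) : R :=
  if xs is x :: xs' then lrun (lupdate l x) xs' else l.

Fixpoint hist_prob (theta : bool) (l : R) (xs : seq bool) : R :=
  if xs is x :: xs' then report_prob theta l x * hist_prob theta (lupdate l x) xs'
  else 1.

Definition correct_prob (theta : bool) (l : R) : R :=
  \int[lebesgue_measure]_(s in [set: R])
    (sig_pdf theta s * (if intended l s == theta then 1 else 0)).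

(* P(a_{k+1} = theta): theta uniform, averaged over all histories
   x_1..x_k of reported actions of the first k agents (l_1 = 0) *)
Definition prob_correct (k : nat) : R :=
  \sum_(theta : bool) (1 / 2) *
    \sum_(xs : k.-tuple bool)
       hist_prob theta 0 xs * correct_prob theta (lrun 0 xs).

End Model.

Definition asymptotic_learning {R : realType} (sigma : R) : Prop :=
  (prob_correct sigma : nat -> R) @ \oo --> (1 : R).

From mathcomp Require Import all_boot all_order all_algebra.
From mathcomp Require Import all_classical all_reals all_analysis.
From mathcomp Require Import ring lra.
Set Implicit Arguments. Unset Strict Implicit. Unset Printing Implicit Defensive.
Import Order.TTheory GRing.Theory Num.Theory.
Import numFieldNormedType.Exports.
Local Open Scope classical_set_scope.
Local Open Scope ring_scope.

(* Track the Bhattacharyya coefficient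
     B_k = sum over report histories xs of length k of sqrt (P_+(xs) P_-(xs))
   of the two conditional laws of the public history.  If xs has public
   log-likelihood ratio l, then P_+(xs) = sqrt (P_+ P_-) e^(l/2) and
   P_-(xs) = sqrt (P_+ P_-) e^(-l/2), while the threshold rule t(l) satisfies
   e^(l/2) P(a <> +1 | +1) + e^(-l/2) P(a <> -1 | -1) <= 1; hence
   P(a_(k+1) <> theta) <= B_k / 2.
   A new report multiplies the weight of a history by the Bhattacharyya
   coefficient rho(l) of the two laws of that report.  Averaging the flip
   probability e^(-eps |s - t(l)|) / 2 over eps ~ U[0,1] yields a reporting
   probability that is nondecreasing in the signal and bounded away from 1/2 at
   distance 1 from the threshold, so reports stay informative:
   rho(l) <= 1 - eta(M) with eta(M) > 0 whenever |l| <= M.  Histories with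
   |l| > M have weight at most e^(-M/2) (P_+ + P_-).  Therefore
   B_(k+1) <= (1 - eta) B_k + 2 eta e^(-M/2), i.e.
   B_k <= 2 e^(-M/2) + (1 - eta)^k, and M is arbitrary. *)

Section RealIntegrable.
Context d (T : measurableType d) (R : realType) (mu : measure T R) (D : set T).
Hypothesis mD : measurable D.
Variables f g : T -> R.
Hypotheses (f_int : mu.-integrable D (EFin \o f)) (g_int : mu.-integrable D (EFin \o g)).

Lemma integrable_EFinD : mu.-integrable D (EFin \o (fun x => f x + g x)).
Proof. by apply: eq_integrable (integrableD mD f_int g_int) => // x _ /=; rewrite EFinD. Qed.

Lemma integrable_EFinB : mu.-integrable D (EFin \o (fun x => f x - g x)).
Proof. by apply: eq_integrable (integrableB mD f_int g_int) => // x _ /=; rewrite EFinB. Qed.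

Lemma integrable_EFinZl k : mu.-integrable D (EFin \o (fun x => k * f x)).
Proof. by apply: eq_integrable (integrableZl mD k f_int) => // x _ /=; rewrite EFinM. Qed.

Lemma integrable_EFinZr k : mu.-integrable D (EFin \o (fun x => f x * k)).
Proof. by apply: eq_integrable (integrableZr mD k f_int) => // x _ /=; rewrite EFinM. Qed.

End RealIntegrable.

Lemma Rintegral_ge_itv {R : realType} (g : R -> R) (a b c : R) : a <= b ->
  (@lebesgue_measure R).-integrable setT (EFin \o g) ->
  (forall s, 0 <= g s) -> (forall s, a <= s <= b -> c <= g s) ->
  c * (b - a) <= \int[lebesgue_measure]_s g s.
Proof.
move=> ab g_int g_ge0 g_ge_c.
have -> : c * (b - a) = \int[lebesgue_measure]_s (c * \1_(`[a, b]%classic : set R) s).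
  rewrite RintegralZl //; last exact: integrable_indic_itv.
  rewrite /Rintegral integral_indic //= setIT lebesgue_measure_itv /= lte_fin.
  by case: ltgtP ab => // ->; rewrite subrr.
apply: le_Rintegral => //; first exact/integrable_EFinZl/integrable_indic_itv.
move=> s _; rewrite indicE; case: (boolP (s \in _)) => sI; last by rewrite mulr0.
by rewrite mulr1; apply: g_ge_c; move: sI; rewrite inE /= in_itv.
Qed.

Lemma mul_le_midpoint {F : realFieldType} (x y E : F) :
  0 <= x -> 0 <= y -> 0 < E -> E ^+ 2 * x <= y -> E * x <= (x + y) / 2.
Proof. by move=> x0 y0 E0 Exy; have := mulr_ge0 x0 (sqr_ge0 (1 - E)); nra. Qed.

Lemma expRN_le_onem_half {R : realType} (e : R) : 0 <= e <= 1 -> expR (- e) <= 1 - e / 2.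
Proof.
move=> /andP[e0 e1]; rewrite expRN.
have e1_gt0 : 0 < 1 + e by lra.
apply: (@le_trans _ _ (1 + e)^-1).
  by rewrite lef_pV2 ?posrE ?expR_gt0 // expR_ge1Dx.
by rewrite -(@ler_pM2l _ (1 + e)) // mulfV ?gt_eqF //; nra.
Qed.

Lemma expRN_le_inv {R : realType} (x : R) : 0 < x -> expR (- x) <= x^-1.
Proof.
move=> x_gt0; rewrite expRN lef_pV2 ?posrE ?expR_gt0 //.
by apply: le_trans (expR_ge1Dx x); rewrite lerDr.
Qed.

Lemma geomean_expR_ln {R : realType} (P Q : R) : 0 < P -> 0 < Q ->
  Num.sqrt (P * Q) = Q * expR (ln (P / Q) / 2).
Proof.
move=> P_gt0 Q_gt0.
have -> : P * Q = (Q * expR (ln (P / Q) / 2)) ^+ 2.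
  rewrite exprMn -expRM_natr mulrC divfK ?pnatr_eq0 // lnK ?posrE ?divr_gt0 //.
  by field; rewrite gt_eqF.
by rewrite sqrtr_sqr ger0_norm // mulr_ge0 ?expR_ge0 // ltW.
Qed.

Lemma bhattacharyya_bernoulli_le {R : rcfType} (p q : R) : 0 <= p <= 1 -> 0 <= q <= 1 ->
  Num.sqrt (p * q) + Num.sqrt ((1 - p) * (1 - q)) <= 1 - (p - q) ^+ 2 / 8.
Proof.
move=> /andP[p0 p1] /andP[q0 q1].
rewrite !sqrtrM ?subr_ge0 //.
have [a_ge0 b_ge0] := (sqrtr_ge0 p, sqrtr_ge0 q).
have [a2 b2] : Num.sqrt p ^+ 2 = p /\ Num.sqrt q ^+ 2 = q by rewrite !sqr_sqrtr.
have [c2 d2] : Num.sqrt (1 - p) ^+ 2 = 1 - p /\ Num.sqrt (1 - q) ^+ 2 = 1 - q.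
  by rewrite !sqr_sqrtr // subr_ge0.
have [a1 b1] : Num.sqrt p <= 1 /\ Num.sqrt q <= 1 by rewrite -sqrtr1 !ler_sqrt.
set a := Num.sqrt p in a_ge0 a2 a1 *; set b := Num.sqrt q in b_ge0 b2 b1 *.
set c := Num.sqrt (1 - p) in c2 *; set d := Num.sqrt (1 - q) in d2 *.
(* [(p - q)^2 = (a - b)^2 (a + b)^2 <= 4 (a - b)^2] and
   [a b + c d = 1 - ((a - b)^2 + (c - d)^2) / 2]. *)
have pq : (p - q) ^+ 2 <= (a - b) ^+ 2 * 4.
  rewrite -a2 -b2 (_ : _ - _ = (a - b) * (a + b)); last by ring.
  by rewrite exprMn ler_wpM2l ?sqr_ge0 //; nra.
have := sqr_ge0 (c - d); nra.
Qed.

Lemma big_tuple0 (V : nmodType) (T : finType) (F : seq T -> V) :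
  \sum_(xs : 0.-tuple T) F xs = F [::].
Proof. by rewrite (big_pred1 [tuple]) // => xs; rewrite [xs]tuple0 /= eqxx. Qed.

Lemma big_tuple_rcons (V : nmodType) (T : finType) k (F : seq T -> V) :
  \sum_(xs : k.+1.-tuple T) F xs = \sum_(xs : k.-tuple T) \sum_(x : T) F (rcons xs x).
Proof.
pose split_last (t : k.+1.-tuple T) :=
  (belast_tuple (thead t) [tuple of behead t], last (thead t) (behead t)).
have rconsK : bijective (fun p : k.-tuple T * T => [tuple of rcons p.1 p.2]).
  exists split_last.
    case=> -[[|y ys] sz] x; rewrite /split_last /=; congr pair => //.
    - exact: val_inj.
    - by apply: val_inj; rewrite /= belast_rcons.
    - by rewrite last_rcons.
  by move=> t; apply: val_inj; rewrite /= -lastI; case: t => -[].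
by rewrite (reindex _ (onW_bij _ rconsK)) pair_big.
Qed.

Section AveragedFlip.
Context {R : realType}.
Local Notation mu := (@lebesgue_measure R).
Local Notation I01 := (`[0%R, 1%R]%classic : set R).

Lemma measure_unit_itv : mu I01 = 1%E.
Proof. by rewrite lebesgue_measure_itv/= lte01 oppr0 adde0. Qed.

Lemma measurable_unit_itv : measurable I01.
Proof. exact: measurable_itv. Qed.

Lemma unit_itvP e : I01 e -> 0 <= e <= 1.
Proof. by rewrite /= in_itv. Qed.

Lemma bounded_integrable_unit_itv (f : R -> R) (M : R) :
  measurable_fun I01 f -> (forall e, I01 e -> `|f e| <= M) ->
  mu.-integrable I01 (EFin \o f).
Proof.
move=> mf fM; apply: measurable_bounded_integrable => //.
  by rewrite /= measure_unit_itv ltry.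
exists M; split; first exact: num_real.
by move=> x Mx y yI /=; apply: le_trans (fM _ yI) _; apply: ltW.
Qed.

Lemma nonincreasing_integrable_unit_itv (f : R -> R) (M : R) :
  nonincreasing_fun f -> (forall e, I01 e -> `|f e| <= M) ->
  mu.-integrable I01 (EFin \o f).
Proof.
move=> f_noninc; apply: bounded_integrable_unit_itv.
exact: measurable_realfun.nonincreasing_measurable measurable_unit_itv f_noninc.
Qed.

Lemma integrable_unit_itv_cst (c : R) : mu.-integrable I01 (EFin \o (fun=> c)).
Proof. by apply: (@bounded_integrable_unit_itv _ `|c|) => //; exact: measurable_cst. Qed.

Lemma Rintegral_unit_itv_cst (c : R) : \int[mu]_(e in I01) c = c.
Proof.
rewrite Rintegral_cst //.
have -> : fine (mu I01) = 1 by rewrite measure_unit_itv.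
by rewrite mulr1.
Qed.

Definition flip_dist (d e : R) : R := expR (- (e * d)) / 2.

Definition avg_flip (d : R) : R := \int[mu]_(e in I01) flip_dist d e.

Lemma flip_dist_ge0 d e : 0 <= flip_dist d e.
Proof. by rewrite divr_ge0 // expR_ge0. Qed.

Lemma flip_dist_le_half d e : 0 <= d -> 0 <= e -> flip_dist d e <= 1 / 2.
Proof. by move=> d0 e0; rewrite ler_pM2r // expR_le1 oppr_le0 mulr_ge0. Qed.

Lemma integrable_flip_dist d : 0 <= d -> mu.-integrable I01 (EFin \o flip_dist d).
Proof.
move=> d0; apply: (@nonincreasing_integrable_unit_itv _ (1 / 2)).
  by move=> x y xy; rewrite ler_pM2r // ler_expR lerN2 ler_wpM2r.
by move=> e /unit_itvP/andP[e0 _]; rewrite ger0_norm ?flip_dist_ge0 ?flip_dist_le_half.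
Qed.

Lemma avg_flip_ge0 d : 0 <= avg_flip d.
Proof. by apply: Rintegral_ge0 => e _; exact: flip_dist_ge0. Qed.

Lemma avg_flip_le_half d : 0 <= d -> avg_flip d <= 1 / 2.
Proof.
move=> d0; rewrite -[leRHS]Rintegral_unit_itv_cst.
apply: le_Rintegral => //; [exact: integrable_flip_dist | exact: integrable_unit_itv_cst |].
by move=> e /unit_itvP/andP[e0 _]; exact: flip_dist_le_half.
Qed.

Lemma avg_flip0 : avg_flip 0 = 1 / 2.
Proof.
rewrite -[RHS]Rintegral_unit_itv_cst; apply: eq_Rintegral => e _.
by rewrite /flip_dist mulr0 oppr0 expR0.
Qed.

Lemma le_avg_flip d1 d2 : 0 <= d1 -> d1 <= d2 -> avg_flip d2 <= avg_flip d1.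
Proof.
move=> d10 d12; apply: le_Rintegral => //.
- by apply: integrable_flip_dist; apply: le_trans d12.
- exact: integrable_flip_dist.
- move=> e /unit_itvP/andP[e0 _]; rewrite ler_pM2r // ler_expR lerN2.
  exact: ler_wpM2l.
Qed.

Lemma avg_flip1_gt0 : 0 < avg_flip 1.
Proof.
apply: (@lt_le_trans _ _ (expR (-1) / 2)); first by rewrite divr_gt0 // expR_gt0.
rewrite -[leLHS]Rintegral_unit_itv_cst.
apply: le_Rintegral => //; [exact: integrable_unit_itv_cst | exact: integrable_flip_dist |].
by move=> e /unit_itvP/andP[_ e1]; rewrite ler_pM2r // ler_expR lerN2 mulr1.
Qed.

(* [flip_dist 1 e <= (1 - e/2)/2 = 1/4 + (1 - e)/4], which integrates to 3/8. *)
Lemma avg_flip1_le : avg_flip 1 <= 3 / 8.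
Proof.
pose g (e : R) := unstable.onem e ^+ 1.
have g_int : mu.-integrable I01 (EFin \o g).
  apply: (@nonincreasing_integrable_unit_itv _ 1).
    by move=> x y xy; rewrite /g /unstable.onem !expr1 lerB.
  by move=> e /unit_itvP/andP[e0 e1]; rewrite /g /unstable.onem expr1 ger0_norm; lra.
have g4_int : mu.-integrable I01 (EFin \o (fun e => g e / 4)).
  exact: integrable_EFinZr.
apply: (@le_trans _ _ (\int[mu]_(e in I01) (1 / 4 + g e / 4))).
  apply: le_Rintegral => //; first exact: integrable_flip_dist.
    by apply: integrable_EFinD => //; exact: (integrable_unit_itv_cst (1 / 4)).
  move=> e /unit_itvP/andP[e0 e1]; rewrite /flip_dist /g mulr1 /unstable.onem expr1.
  by have := @expRN_le_onem_half _ e; rewrite e0 e1 => /(_ isT); lra.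
rewrite RintegralD //; last exact: (integrable_unit_itv_cst (1 / 4)).
by rewrite Rintegral_unit_itv_cst RintegralZr ?Rintegral_onemXn //; lra.
Qed.

End AveragedFlip.

Section SignalDensity.
Context {R : realType} (sigma : R).
Hypothesis sigma_gt0 : 0 < sigma.
Local Notation mu := (@lebesgue_measure R).
Local Notation f := (sig_pdf sigma).
Local Notation t := (thr sigma).
Local Notation kappa := (sigma ^+ 2 *+ 2).

Lemma sig_pdf_ge0 th s : 0 <= f th s.
Proof. exact: normal_pdf_ge0. Qed.

Lemma sig_pdfE th s : f th s = normal_peak sigma * expR (- (s - sgn th) ^+ 2 / kappa).
Proof. by rewrite /sig_pdf normal_pdfE ?gt_eqF. Qed.

Lemma integrable_sig_pdf th : mu.-integrable setT (EFin \o f th).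
Proof. exact: integrable_normal_pdf. Qed.

Lemma Rintegral_sig_pdf th : \int[mu]_s f th s = 1.
Proof. by rewrite /Rintegral integral_normal_pdf. Qed.

Lemma integrable_sig_pdfM th (g : R -> R) (M : R) : measurable_fun setT g ->
  (forall s, `|g s| <= M) -> mu.-integrable setT (EFin \o (fun s => f th s * g s)).
Proof.
move=> g_meas g_bd.
have g_bounded : [bounded g x | x in setT].
  exists M; split; first exact: num_real.
  by move=> x Mx y _; apply: le_trans (g_bd y) _; apply: ltW.
have := integrableMl measurableT (integrable_sig_pdf th) g_meas g_bounded.
by apply: eq_integrable => // s _ /=; rewrite EFinM.
Qed.

Lemma sig_pdfN th s : f th (- s) = f (~~ th) s.
Proof.
rewrite !sig_pdfE; have -> // : (- s - sgn th) ^+ 2 = (s - sgn (~~ th)) ^+ 2.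
by case: th; rewrite [sgn _]/= [sgn _]/=; ring.
Qed.

Lemma sig_pdf_llr s : f true s = expR (2 * s / sigma ^+ 2) * f false s.
Proof.
rewrite !sig_pdfE mulrCA -expRD [sgn true]/= [sgn false]/=.
have -> // : 2 * s / sigma ^+ 2 + - (s - -1) ^+ 2 / kappa = - (s - 1) ^+ 2 / kappa.
by field; rewrite gt_eqF.
Qed.

Lemma sig_pdf_false_le s : 0 <= s -> f false s <= f true s.
Proof.
move=> s0; rewrite sig_pdf_llr ler_peMl ?sig_pdf_ge0 // -expR0 ler_expR.
by rewrite divr_ge0 ?sqr_ge0 ?mulr_ge0.
Qed.

Lemma sig_pdf_true_le s : s <= 0 -> f true s <= f false s.
Proof.
move=> s0; have := sig_pdf_false_le (s := - s).
by rewrite oppr_ge0 => /(_ s0); rewrite !sig_pdfN.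
Qed.

Lemma sig_pdf_sub_mul_ge0 (h : R -> R) s : nondecreasing_fun h ->
  0 <= (f true s - f false s) * (h s - h 0).
Proof.
move=> h_nd; have [s0|s0] := lerP 0 s.
  by rewrite mulr_ge0 // subr_ge0 ?h_nd // sig_pdf_false_le.
by rewrite mulr_le0 // subr_le0 ?h_nd ?sig_pdf_true_le // ltW.
Qed.

Lemma sig_pdf_below_thr l s : s <= t l -> expR l * f true s <= f false s.
Proof.
move=> st; rewrite sig_pdf_llr mulrA -expRD ler_piMl ?sig_pdf_ge0 //.
have : 2 * s / sigma ^+ 2 <= - l by rewrite ler_pdivrMr ?exprn_gt0 //; rewrite /thr in st; lra.
by rewrite expR_le1; lra.
Qed.

Lemma sig_pdf_above_thr l s : t l < s -> expR (- l) * f false s <= f true s.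
Proof.
move=> ts; rewrite sig_pdf_llr; apply: ler_wpM2r; first exact: sig_pdf_ge0.
by rewrite ler_expR ler_pdivlMr ?exprn_gt0 //; rewrite /thr in ts; lra.
Qed.

Definition sig_pdf_lb (T : R) : R := normal_peak sigma * expR (- (T + 1) ^+ 2 / kappa).

Lemma sig_pdf_lb_gt0 T : 0 < sig_pdf_lb T.
Proof. by rewrite mulr_gt0 ?expR_gt0 // normal_peak_gt0 // gt_eqF. Qed.

Lemma sig_pdf_ge_lb th s T : `|s| <= T -> sig_pdf_lb T <= f th s.
Proof.
move=> sT; rewrite sig_pdfE ler_pM2l ?normal_peak_gt0 ?gt_eqF //.
rewrite ler_expR !mulNr lerN2 ler_pM2r ?invr_gt0 ?pmulrn_rgt0 ?exprn_gt0 //.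
by move: sT; rewrite ler_norml => /andP[sT1 sT2]; case: th; rewrite /sgn; nra.
Qed.

Lemma sig_pdf_sub_ge_lb s T : 1 <= s -> `|s| <= T ->
  sig_pdf_lb T * (1 - expR (- 2 / sigma ^+ 2)) <= f true s - f false s.
Proof.
move=> s1 sT; have sig2_gt0 : 0 < sigma ^+ 2 by rewrite exprn_gt0.
have -> : f true s - f false s = f true s * (1 - expR (- (2 * s / sigma ^+ 2))).
  rewrite mulrBr mulr1 mulrC; congr (_ - _).
  by rewrite sig_pdf_llr mulrA -expRD addNr expR0 mul1r.
apply: ler_pM; first exact: ltW (sig_pdf_lb_gt0 T).
- by rewrite subr_ge0 expR_le1 mulNr oppr_le0 divr_ge0 // ltW.
- exact: sig_pdf_ge_lb.
- by rewrite lerD2l lerN2 ler_expR mulNr lerN2 ler_pM2r ?invr_gt0 //; lra.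
Qed.

End SignalDensity.

Section Reports.
Context {R : realType} (sigma : R).
Hypothesis sigma_gt0 : 0 < sigma.
Local Notation mu := (@lebesgue_measure R).
Local Notation f := (sig_pdf sigma).
Local Notation t := (thr sigma).
Local Notation r := (report_prob sigma).

Definition report_given (l s : R) (x : bool) : R :=
  if intended sigma l s == x then 1 - avg_flip `|s - t l| else avg_flip `|s - t l|.

Local Notation h l s := (report_given l s true).

(* [flipprob sigma l s] is convertible to [flip_dist `|s - t l|]. *)
Lemma Rintegral_flipprob l s x :
  \int[mu]_(e in `[0, 1]) (if intended sigma l s == x then 1 - flipprob sigma l s e
                           else flipprob sigma l s e) = report_given l s x.
Proof.
rewrite /report_given; case: eqP => _ //.
rewrite RintegralB //; [|exact: (integrable_unit_itv_cst 1) | exact: integrable_flip_dist].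
by rewrite (Rintegral_unit_itv_cst 1).
Qed.

Lemma report_given_false l s : report_given l s false = 1 - h l s.
Proof. by rewrite /report_given; case: intended => /=; ring. Qed.

Lemma report_given_ge l s x : avg_flip `|s - t l| <= report_given l s x.
Proof.
have := avg_flip_le_half (normr_ge0 (s - t l)).
by rewrite /report_given; case: eqP => _; lra.
Qed.

Lemma report_given_ge0 l s x : 0 <= report_given l s x.
Proof. exact: le_trans (avg_flip_ge0 _) (report_given_ge _ _ _). Qed.

Lemma report_given_le1 l s x : report_given l s x <= 1.
Proof.
have := report_given_ge0 l s (~~ x).
by rewrite /report_given; case: x; case: intended => /=; lra.
Qed.

Lemma report_given_nondecreasing l : nondecreasing_fun (fun s => h l s).
Proof.
move=> s1 s2 s12; rewrite /report_given /intended.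
have := avg_flip_le_half (normr_ge0 (s1 - t l)).
have := avg_flip_le_half (normr_ge0 (s2 - t l)).
case: ltP => h1; case: ltP => h2 /= ? ?; try lra.
- by rewrite lerD2l lerN2 !gtr0_norm ?subr_gt0 //; apply: le_avg_flip; lra.
- by rewrite !ler0_norm ?subr_le0 //; apply: le_avg_flip; lra.
Qed.

Lemma measurable_report_given l x : measurable_fun setT (fun s => report_given l s x).
Proof.
have h_meas : measurable_fun setT (fun s => h l s).
  exact: measurable_realfun.nondecreasing_measurable (report_given_nondecreasing l).
case: x => //; under eq_fun do rewrite report_given_false.
exact: measurable_realfun.measurable_funB.
Qed.

Lemma report_given_thr l : h l (t l) = 1 / 2.
Proof. by rewrite /report_given /intended ltxx subrr normr0 avg_flip0 /=; lra. Qed.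

Lemma report_given_thrD1 l : h l (t l + 1) = 1 - avg_flip 1.
Proof. by rewrite /report_given /intended ltrDl ltr01 addrAC subrr add0r normr1. Qed.

Lemma report_given_thrB1 l : h l (t l - 1) = avg_flip 1.
Proof.
rewrite /report_given /intended ltNge lerBlDr lerDl ler01 /=.
by rewrite addrAC subrr add0r normrN normr1.
Qed.

Lemma integrable_sig_pdf_report th l x :
  mu.-integrable setT (EFin \o (fun s => f th s * report_given l s x)).
Proof.
apply: (@integrable_sig_pdfM _ sigma th _ 1) => [|s]; first exact: measurable_report_given.
by rewrite ger0_norm ?report_given_ge0 ?report_given_le1.
Qed.

Lemma report_probE th l x : r th l x = \int[mu]_s (f th s * report_given l s x).
Proof. by apply: eq_Rintegral => s _; rewrite Rintegral_flipprob. Qed.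

Lemma report_prob_false th l : r th l false = 1 - r th l true.
Proof.
rewrite !report_probE -(Rintegral_sig_pdf sigma th) -RintegralB //;
  [|exact: integrable_sig_pdf | exact: integrable_sig_pdf_report].
by apply: eq_Rintegral => s _; rewrite report_given_false; ring.
Qed.

Lemma report_prob_gt0 th l x : 0 < r th l x.
Proof.
have [tl1 tl2] := (ler_normlW (lexx `|t l|), lerNnormlW (lexx `|t l|)).
set c := sig_pdf_lb sigma (`|t l| + 1) * avg_flip 1.
have c_gt0 : 0 < c by rewrite mulr_gt0 ?sig_pdf_lb_gt0 ?avg_flip1_gt0.
apply: (@lt_le_trans _ _ (c * ((t l + 1) - (t l - 1)))); first by rewrite mulr_gt0 //; lra.
rewrite report_probE; apply: Rintegral_ge_itv => [||s|s /andP[s1 s2]].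
- lra.
- exact: integrable_sig_pdf_report.
- by rewrite mulr_ge0 ?sig_pdf_ge0 ?report_given_ge0.
- apply: ler_pM; [exact: ltW (sig_pdf_lb_gt0 _ _) | exact: ltW avg_flip1_gt0 | |].
    by apply: sig_pdf_ge_lb => //; rewrite ler_norml; apply/andP; split; lra.
  apply: le_trans (report_given_ge l s x); apply: le_avg_flip => //.
  by rewrite ler_norml; apply/andP; split; lra.
Qed.

Lemma integrable_sig_pdf_report_sub th l c :
  mu.-integrable setT (EFin \o (fun s => f th s * (h l s - c))).
Proof.
apply: (@integrable_sig_pdfM _ sigma th _ (1 + `|c|)) => [|s].
  exact: measurable_realfun.measurable_funB (measurable_report_given _ _) (measurable_cst _).
apply: le_trans (ler_normB _ _) _.
by rewrite lerD2r ger0_norm ?report_given_ge0 ?report_given_le1.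
Qed.

Lemma Rintegral_sig_pdf_report_sub th l c :
  \int[mu]_s (f th s * (h l s - c)) = r th l true - c.
Proof.
transitivity (\int[mu]_s (f th s * h l s - c * f th s)).
  by apply: eq_Rintegral => s _; ring.
rewrite RintegralB //; [|exact: integrable_sig_pdf_report | exact/integrable_EFinZl/integrable_sig_pdf].
by rewrite RintegralZl ?Rintegral_sig_pdf ?mulr1 -?report_probE //; exact: integrable_sig_pdf.
Qed.

Lemma report_prob_subE l : r true l true - r false l true =
  \int[mu]_s ((f true s - f false s) * (h l s - h l 0)).
Proof.
have -> : r true l true - r false l true =
    (r true l true - h l 0) - (r false l true - h l 0) by ring.
rewrite -!Rintegral_sig_pdf_report_sub -RintegralB //;
  [|exact: integrable_sig_pdf_report_sub | exact: integrable_sig_pdf_report_sub].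
by apply: eq_Rintegral => s _; ring.
Qed.

(* A bound on one unit interval suffices: the integrand of [report_prob_subE] is
   nonnegative everywhere. *)
Lemma report_prob_sub_ge_itv l a c :
  (forall s, a <= s <= a + 1 -> c <= (f true s - f false s) * (h l s - h l 0)) ->
  c <= r true l true - r false l true.
Proof.
move=> c_le; have := Rintegral_ge_itv _ _ _ c_le; rewrite addrAC subrr add0r mulr1.
rewrite report_prob_subE; apply=> [||s]; first lra.
  apply: eq_integrable (integrable_EFinB measurableT
    (integrable_sig_pdf_report_sub true l (h l 0))
    (integrable_sig_pdf_report_sub false l (h l 0))) => // s _ /=.
  by congr EFin; ring.
exact: sig_pdf_sub_mul_ge0 (report_given_nondecreasing l).
Qed.

Lemma norm_thr_le l M : `|l| <= M -> `|t l| <= sigma ^+ 2 * M / 2.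
Proof.
move=> lM; rewrite /thr normrM normrN normfV normrM ger0_norm ?sqr_ge0 //.
by rewrite (ger0_norm (ler0n _ 2)) ler_pM2r // ler_pM2l // exprn_gt0.
Qed.

Definition informativeness (M : R) : R :=
  sig_pdf_lb sigma (sigma ^+ 2 * M / 2 + 2) * (1 - expR (- 2 / sigma ^+ 2)) / 8.

Lemma informativeness_gt0 M : 0 < informativeness M.
Proof.
rewrite divr_gt0 // mulr_gt0 ?sig_pdf_lb_gt0 // subr_gt0 expR_lt1.
by rewrite mulNr oppr_lt0 divr_gt0 // exprn_gt0.
Qed.

(* On the unit interval just above (resp. below) the threshold, [h l] stays
   above [5/8] (resp. below [3/8]) while [h l 0] is on the other side of [1/2],
   and the two signal densities differ by a margin that is uniform in [|l| <= M]. *)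
Lemma report_prob_informative l M : `|l| <= M ->
  informativeness M <= r true l true - r false l true.
Proof.
move=> lM; have tM := norm_thr_le lM.
have [tl1 tl2] := (ler_normlW (lexx `|t l|), lerNnormlW (lexx `|t l|)).
set T := sigma ^+ 2 * M / 2 + 2.
set gap := sig_pdf_lb sigma T * (1 - expR (- 2 / sigma ^+ 2)).
have gap_ge0 : 0 <= gap.
  by have := informativeness_gt0 M; rewrite /informativeness -/T -/gap; lra.
have flip1_le := avg_flip1_le (R := R).
rewrite /informativeness -/T -/gap.
have [t_ge0|t_lt0] := lerP 0 (t l).
- apply: (report_prob_sub_ge_itv (a := t l + 1)) => s /andP[s1 s2].
  have df : gap <= f true s - f false s.
    by apply: sig_pdf_sub_ge_lb => //; [lra | rewrite /T ler_norml; apply/andP; split; lra].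
  have dh1 : 1 - avg_flip 1 <= h l s.
    by rewrite -(report_given_thrD1 l); exact: report_given_nondecreasing.
  have dh0 : h l 0 <= 1 / 2.
    by rewrite -(report_given_thr l); exact: report_given_nondecreasing.
  have : gap * (1 / 8) <= (f true s - f false s) * (h l s - h l 0).
    by apply: ler_pM => //; lra.
  lra.
- apply: (report_prob_sub_ge_itv (a := t l - 2)) => s /andP[s1 s2].
  have df : gap <= f false s - f true s.
    have := @sig_pdf_sub_ge_lb _ sigma sigma_gt0 (- s) T; rewrite !(sig_pdfN sigma_gt0).
    by apply; [lra | rewrite normrN /T ler_norml; apply/andP; split; lra].
  have dh1 : h l s <= avg_flip 1.
    by rewrite -(report_given_thrB1 l); apply: report_given_nondecreasing; lra.
  have dh0 : 1 / 2 <= h l 0.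
    by rewrite -(report_given_thr l); apply: report_given_nondecreasing; lra.
  have : gap * (1 / 8) <= (f false s - f true s) * (h l 0 - h l s).
    by apply: ler_pM => //; lra.
  lra.
Qed.

End Reports.

Section ErrorBound.
Context {R : realType} (sigma : R).
Hypothesis sigma_gt0 : 0 < sigma.
Local Notation mu := (@lebesgue_measure R).
Local Notation f := (sig_pdf sigma).
Local Notation correct th l s := (if intended sigma l s == th then 1 else 0 : R).

Lemma measurable_correct th l : measurable_fun setT (fun s => correct th l s).
Proof.
case: th.
  apply: measurable_realfun.nondecreasing_measurable => // x y xy.
  by rewrite /intended; case: ltP => h1; case: ltP => h2 //=; lra.
apply: measurable_realfun.nonincreasing_measurable => // x y xy.
by rewrite /intended; case: ltP => h1; case: ltP => h2 //=; lra.
Qed.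

Lemma correct_probC th l :
  1 - correct_prob sigma th l = \int[mu]_s (f th s * (1 - correct th l s)).
Proof.
have f_int := integrable_sig_pdf sigma th.
have fc_int : mu.-integrable setT (EFin \o (fun s => f th s * correct th l s)).
  apply: (@integrable_sig_pdfM _ sigma th _ 1); first exact: measurable_correct.
  by move=> s; case: eqP; rewrite ?normr1 ?normr0.
rewrite -[X in X - _](Rintegral_sig_pdf sigma th) -RintegralB //.
by apply: eq_Rintegral => s _; rewrite mulrBr mulr1.
Qed.

Lemma error_density_le l s :
  expR (l / 2) * (f true s * (1 - correct true l s)) +
  expR (- (l / 2)) * (f false s * (1 - correct false l s)) <= (f true s + f false s) / 2.
Proof.
have [f_ge0 f'_ge0] := (sig_pdf_ge0 sigma true s, sig_pdf_ge0 sigma false s).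
have expR_half2 x : expR (x / 2) ^+ 2 = expR x by rewrite -expRM_natr; congr expR; field.
case: (boolP (intended sigma l s)) => /= hs; rewrite subrr mulr0 mulr0 subr0 mulr1.
  rewrite add0r addrC; apply: mul_le_midpoint; rewrite ?expR_gt0 //.
  by rewrite -mulNr expR_half2; exact: (sig_pdf_above_thr sigma_gt0).
rewrite addr0; apply: mul_le_midpoint; rewrite ?expR_gt0 //.
by rewrite expR_half2; apply: (sig_pdf_below_thr sigma_gt0); rewrite leNgt.
Qed.

Lemma correct_prob_le1 th l : correct_prob sigma th l <= 1.
Proof.
rewrite -subr_ge0 correct_probC; apply: Rintegral_ge0 => s _.
by rewrite mulr_ge0 ?sig_pdf_ge0 //; case: eqP; rewrite ?subrr ?subr0.
Qed.

(* The threshold rule minimises [e^(l/2) P(error | +1) + e^(-l/2) P(error | -1)]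
   pointwise in the signal, and [1] is the value of that criterion for the rule that
   ignores the signal. *)
Lemma weighted_error_le1 l :
  expR (l / 2) * (1 - correct_prob sigma true l) +
  expR (- (l / 2)) * (1 - correct_prob sigma false l) <= 1.
Proof.
have err_int th : mu.-integrable setT (EFin \o (fun s => f th s * (1 - correct th l s))).
  apply: (@integrable_sig_pdfM _ sigma th _ 1) => [|s].
    exact: measurable_realfun.measurable_funB (measurable_cst _) (measurable_correct _ _).
  by case: eqP; rewrite ?subrr ?subr0 ?normr1 ?normr0.
have f_int := integrable_sig_pdf sigma.
rewrite !correct_probC -!RintegralZl // -RintegralD //;
  [|exact: integrable_EFinZl | exact: integrable_EFinZl].
apply: (@le_trans _ _ (\int[mu]_s ((f true s + f false s) / 2))).
  apply: le_Rintegral => //; last by move=> s _; exact: error_density_le.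
    by apply: integrable_EFinD => //; exact: integrable_EFinZl.
  by apply: integrable_EFinZr => //; exact: integrable_EFinD.
rewrite RintegralZr //; last exact: integrable_EFinD.
by rewrite RintegralD // !Rintegral_sig_pdf; lra.
Qed.

End ErrorBound.

Section Histories.
Context {R : realType} (sigma : R).
Hypothesis sigma_gt0 : 0 < sigma.
Local Notation r := (report_prob sigma).
Local Notation H := (hist_prob sigma).
Local Notation L := (lrun sigma).

Lemma hist_prob_gt0 th l xs : 0 < H th l xs.
Proof.
elim: xs l => [|x xs IH] l /=; first exact: ltr01.
by rewrite mulr_gt0 // report_prob_gt0.
Qed.

Lemma hist_prob_rcons th l xs x : H th l (rcons xs x) = H th l xs * r th (L l xs) x.
Proof. by elim: xs l => [|y xs IH] l /=; rewrite ?mul1r ?mulr1 // IH mulrA. Qed.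

Lemma lrunE l xs : L l xs = l + ln (H true l xs / H false l xs).
Proof.
elim: xs l => [|x xs IH] l /=; first by rewrite divr1 ln1 addr0.
rewrite IH /lupdate -addrA -lnM ?posrE ?divr_gt0 ?report_prob_gt0 ?hist_prob_gt0 //.
by congr (_ + ln _); field; rewrite !gt_eqF ?report_prob_gt0 ?hist_prob_gt0.
Qed.

Lemma sum_hist_prob th l k : \sum_(xs : k.-tuple bool) H th l xs = 1.
Proof.
elim: k => [|k IH]; first by rewrite big_tuple0.
rewrite big_tuple_rcons -[RHS]IH; apply: eq_bigr => xs _.
under eq_bigr do rewrite hist_prob_rcons.
by rewrite -mulr_sumr big_bool /= report_prob_false // addrC subrK mulr1.
Qed.

End Histories.

Section Bhattacharyya.
Context {R : realType} (sigma : R).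
Hypothesis sigma_gt0 : 0 < sigma.
Local Notation r := (report_prob sigma).
Local Notation H := (hist_prob sigma).
Local Notation L := (lrun sigma 0).
Local Notation c := (correct_prob sigma).

Definition bhatt_weight (xs : seq bool) : R := Num.sqrt (H true 0 xs * H false 0 xs).

Definition report_bhatt (l : R) : R := \sum_(x : bool) Num.sqrt (r true l x * r false l x).

Definition bhattacharyya (k : nat) : R := \sum_(xs : k.-tuple bool) bhatt_weight xs.

Definition bhatt_gap (M : R) : R := informativeness sigma M ^+ 2 / 8.

Lemma bhatt_weightE xs : bhatt_weight xs = H false 0 xs * expR (L xs / 2).
Proof.
by rewrite /bhatt_weight geomean_expR_ln ?hist_prob_gt0 // (lrunE sigma_gt0) add0r.
Qed.

Lemma bhatt_weightE' xs : bhatt_weight xs = H true 0 xs * expR (- (L xs / 2)).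
Proof.
rewrite /bhatt_weight mulrC geomean_expR_ln ?hist_prob_gt0 // (lrunE sigma_gt0) add0r.
by rewrite -(invf_div (H true 0 xs)) lnV ?posrE ?divr_gt0 ?hist_prob_gt0 // mulNr.
Qed.

Lemma bhatt_weight_ge0 xs : 0 <= bhatt_weight xs.
Proof. exact: sqrtr_ge0. Qed.

Lemma bhatt_weight_rcons xs x :
  bhatt_weight (rcons xs x) = bhatt_weight xs * Num.sqrt (r true (L xs) x * r false (L xs) x).
Proof.
rewrite /bhatt_weight !hist_prob_rcons -sqrtrM; last first.
  by rewrite mulr_ge0 // ltW // hist_prob_gt0.
by congr Num.sqrt; ring.
Qed.

Lemma bhattacharyya0 : bhattacharyya 0 = 1.
Proof. by rewrite /bhattacharyya big_tuple0 /bhatt_weight /= mulr1 sqrtr1. Qed.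

Lemma bhattacharyyaS k :
  bhattacharyya k.+1 = \sum_(xs : k.-tuple bool) bhatt_weight xs * report_bhatt (L xs).
Proof.
rewrite /bhattacharyya big_tuple_rcons; apply: eq_bigr => xs _.
by rewrite mulr_sumr; apply: eq_bigr => x _; rewrite bhatt_weight_rcons.
Qed.

Lemma report_bhatt_ge0 l : 0 <= report_bhatt l.
Proof. by apply: sumr_ge0 => x _; exact: sqrtr_ge0. Qed.

Lemma report_bhatt_le l : report_bhatt l <= 1 - (r true l true - r false l true) ^+ 2 / 8.
Proof.
have r01 th : 0 <= r th l true <= 1.
  have := report_prob_gt0 sigma_gt0 th l false; have := report_prob_gt0 sigma_gt0 th l true.
  by rewrite report_prob_false => ? ?; apply/andP; split; lra.
by rewrite /report_bhatt big_bool /= !report_prob_false //; exact: bhattacharyya_bernoulli_le.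
Qed.

Lemma report_bhatt_le1 l : report_bhatt l <= 1.
Proof.
apply: le_trans (report_bhatt_le l) _.
by rewrite lerBlDr lerDl divr_ge0 ?sqr_ge0.
Qed.

Lemma report_bhatt_le_gap l M : `|l| <= M -> report_bhatt l <= 1 - bhatt_gap M.
Proof.
move=> lM; apply: le_trans (report_bhatt_le l) _.
have := report_prob_informative sigma_gt0 lM; have := informativeness_gt0 sigma_gt0 M.
rewrite /bhatt_gap; set i := informativeness sigma M => i_gt0 ir.
by rewrite lerD2l lerN2 ler_pM2r // ler_sqr //; rewrite nnegrE; lra.
Qed.

Lemma bhatt_gap_gt0 M : 0 < bhatt_gap M.
Proof. by rewrite divr_gt0 // exprn_gt0 // informativeness_gt0. Qed.

Lemma bhatt_gap_le1 M : 0 <= M -> bhatt_gap M <= 1.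
Proof.
move=> M_ge0; have := @report_bhatt_le_gap 0 M.
by rewrite normr0 => /(_ M_ge0); have := report_bhatt_ge0 0; lra.
Qed.

Lemma bhatt_weight_large_llr xs M : M < `|L xs| ->
  bhatt_weight xs <= expR (- (M / 2)) * (H true 0 xs + H false 0 xs).
Proof.
have [P_gt0 Q_gt0] := (hist_prob_gt0 sigma_gt0 true 0 xs, hist_prob_gt0 sigma_gt0 false 0 xs).
have eM_gt0 := expR_gt0 (- (M / 2)).
rewrite ltr_normr => /orP[] LM.
  have : expR (- (L xs / 2)) <= expR (- (M / 2)) by rewrite ler_expR; lra.
  by rewrite bhatt_weightE'; nra.
have : expR (L xs / 2) <= expR (- (M / 2)) by rewrite ler_expR; lra.
by rewrite bhatt_weightE; nra.
Qed.

Lemma bhatt_weight_step xs M : bhatt_weight xs * report_bhatt (L xs) <=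
  (1 - bhatt_gap M) * bhatt_weight xs +
  bhatt_gap M * expR (- (M / 2)) * (H true 0 xs + H false 0 xs).
Proof.
have w_ge0 := bhatt_weight_ge0 xs.
have c_ge0 := ltW (bhatt_gap_gt0 M).
have tail_ge0 : 0 <= bhatt_gap M * expR (- (M / 2)) * (H true 0 xs + H false 0 xs).
  have H_ge0 th : 0 <= H th 0 xs by exact/ltW/hist_prob_gt0.
  by rewrite mulr_ge0 ?addr_ge0 // mulr_ge0 ?expR_ge0.
have [LM|LM] := lerP `|L xs| M.
  by have := report_bhatt_le_gap LM; nra.
by have := bhatt_weight_large_llr LM; have := report_bhatt_le1 (L xs); nra.
Qed.

Lemma bhattacharyya_step k M : bhattacharyya k.+1 <=
  (1 - bhatt_gap M) * bhattacharyya k + bhatt_gap M * expR (- (M / 2)) * 2.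
Proof.
rewrite bhattacharyyaS.
apply: le_trans (ler_sum _ (fun (xs : k.-tuple bool) _ => bhatt_weight_step xs M)) _.
by rewrite big_split /= -!mulr_sumr big_split /= !sum_hist_prob -/(bhattacharyya k); lra.
Qed.

Lemma bhattacharyya_le k M : 0 <= M ->
  bhattacharyya k <= 2 * expR (- (M / 2)) + (1 - bhatt_gap M) ^+ k.
Proof.
move=> M_ge0; have q_ge0 : 0 <= 1 - bhatt_gap M by rewrite subr_ge0 bhatt_gap_le1.
elim: k => [|k IH]; first by rewrite bhattacharyya0 expr0 lerDr mulr_ge0 ?expR_ge0.
apply: le_trans (bhattacharyya_step k M) _.
have := ler_wpM2l q_ge0 IH; rewrite exprS; lra.
Qed.

Definition hist_error (xs : seq bool) : R :=
  H true 0 xs * (1 - c true (L xs)) + H false 0 xs * (1 - c false (L xs)).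

Lemma hist_error_ge0 xs : 0 <= hist_error xs.
Proof.
have H_ge0 th : 0 <= H th 0 xs by exact/ltW/hist_prob_gt0.
by rewrite addr_ge0 // mulr_ge0 // subr_ge0 correct_prob_le1.
Qed.

Lemma hist_error_le xs : hist_error xs <= bhatt_weight xs.
Proof.
have E1 : bhatt_weight xs * expR (L xs / 2) = H true 0 xs.
  by rewrite bhatt_weightE' -mulrA -expRD addNr expR0 mulr1.
have E2 : bhatt_weight xs * expR (- (L xs / 2)) = H false 0 xs.
  by rewrite bhatt_weightE -mulrA -expRD addrN expR0 mulr1.
rewrite /hist_error -E1 -E2 -!mulrA -mulrDr ler_piMr ?bhatt_weight_ge0 //.
exact: weighted_error_le1.
Qed.

Lemma prob_correctC k :
  1 - prob_correct sigma k = 1 / 2 * \sum_(xs : k.-tuple bool) hist_error xs.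
Proof.
rewrite /prob_correct big_bool /=.
have -> : \sum_(xs : k.-tuple bool) hist_error xs =
    \sum_(xs : k.-tuple bool) H true 0 xs + \sum_(xs : k.-tuple bool) H false 0 xs -
    (\sum_(xs : k.-tuple bool) H true 0 xs * c true (L xs) +
     \sum_(xs : k.-tuple bool) H false 0 xs * c false (L xs)).
  by rewrite -!big_split -sumrB; apply: eq_bigr => xs _; rewrite /hist_error /=; ring.
by rewrite !(sum_hist_prob sigma); lra.
Qed.

Lemma prob_correctC_bhattacharyya k : 0 <= 1 - prob_correct sigma k <= bhattacharyya k / 2.
Proof.
rewrite prob_correctC; apply/andP; split.
  by rewrite mulr_ge0 // sumr_ge0 // => xs _; exact: hist_error_ge0.
rewrite mul1r [leRHS]mulrC ler_pM2l ?invr_gt0 //.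
by apply: ler_sum => xs _; exact: hist_error_le.
Qed.

Lemma prob_correctC_le k M : 0 <= M ->
  `|1 - prob_correct sigma k| <= expR (- (M / 2)) + (1 - bhatt_gap M) ^+ k / 2.
Proof.
move=> M_ge0; have /andP[err_ge0 err_le] := prob_correctC_bhattacharyya k.
by have := bhattacharyya_le k M_ge0; rewrite ger0_norm //; lra.
Qed.

End Bhattacharyya.

Theorem theorem9 (R : realType) (sigma : R) (hsigma : 0 < sigma) :
  asymptotic_learning sigma.
Proof.
apply/cvgrPdist_le => eps eps_gt0.
pose M := 4 / eps.
have M_ge0 : 0 <= M by rewrite divr_ge0 // ltW.
have expM_le : expR (- (M / 2)) <= eps / 2.
  have -> : M / 2 = (eps / 2)^-1 by rewrite invf_div /M; field; rewrite gt_eqF.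
  by rewrite -[leRHS]invrK expRN_le_inv // invr_gt0 divr_gt0.
have /andP[q_ge0 q_lt1] : 0 <= 1 - bhatt_gap sigma M < 1.
  have := bhatt_gap_gt0 hsigma M; have := bhatt_gap_le1 hsigma M_ge0.
  by move=> ? ?; apply/andP; split; lra.
have /cvgrPdist_le /(_ eps eps_gt0) : (1 - bhatt_gap sigma M) ^+ n @[n --> \oo] --> 0.
  by apply: cvg_expr; rewrite ger0_norm.
apply: filterS => n; rewrite sub0r normrN ger0_norm ?exprn_ge0 // => qn_le.
by apply: le_trans (prob_correctC_le hsigma n M_ge0) _; lra.
Qed.
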